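(* Let $K\subset\mathbb E$ be a regular cone, $F$ a $\nu$-normal barrier for $K$, and $H:\mathbb E\to\mathbb E^*$ a self-adjoint positive definite linear operator. Suppose $u\in\mathbb E$ satisfies $\mathcal E_H(u):=\{w\in\mathbb E:\langle H(w-u),w-u\rangle\le 1\}\subseteq K$, and that for some $x\in\operatorname{int}K$ we have $\langle\nabla F(x),u-x\rangle\ge 0$. Then $H\succeq \frac{1}{4\nu^2}\nabla^2F(x)$. In particular (taking $H$ to be a suitable multiple of $\nabla^2F(u)$ via the Dikin ellipsoid), if $x,u\in\operatorname{int}K$ and $\langle\nabla F(x),u-x\rangle\ge0$ then $\nabla^2F(u)\succeq\frac1{4\nu^2}\nabla^2F(x)$; and if $x\in\operatorname{int}K$, $u\in K$, then $\nabla^2F(x+u)\preceq 4\nu^2\nabla^2F(x)$.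
   Context: $\mathbb E$ is a finite-dimensional real vector space with dual $\mathbb E^*$ and pairing $\langle s,x\rangle$. A cone $K\subset\mathbb E$ is regular if it is closed, convex, pointed, with nonempty interior. A $\nu$-normal barrier for $K$ is a function $F:\operatorname{int}K\to\mathbb R$ which is a $\nu$-self-concordant barrier (i.e. $|D^3F(x)[h,h,h]|\le 2\langle\nabla^2F(x)h,h\rangle^{3/2}$ for all $x\in\operatorname{int}K,h\in\mathbb E$, $F(x)\to\infty$ as $x\to\partial K$, and $\langle\nabla F(x),[\nabla^2F(x)]^{-1}\nabla F(x)\rangle\le\nu$) and is logarithmically homogeneous: $F(\tau x)=F(x)-\nu\ln\tau$ for all $x\in\operatorname{int}K$, $\tau>0$. For self-adjoint operators $P,R:\mathbb E\to\mathbb E^*$, $P\preceq R$ means $\langle (R-P)h,h\rangle\ge0$ for all $h$. *)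

(* classical reals.  E = R^n, represented by functions
   nat -> R vanishing at coordinates >= n; E^* is identified with R^n
   via the standard pairing; operators E -> E^* are n x n matrices. *)
From Stdlib Require Import Reals.
Open Scope R_scope.

Definition Vec := nat -> R.
Definition Mat := nat -> nat -> R.

Fixpoint sumR (n : nat) (f : nat -> R) : R :=
  match n with O => 0 | S m => sumR m f + f m end.

Definition inE (n : nat) (x : Vec) : Prop := forall i, (n <= i)%nat -> x i = 0.

Definition vzero : Vec := fun _ => 0.
Definition vadd (x y : Vec) : Vec := fun i => x i + y i.
Definition vsub (x y : Vec) : Vec := fun i => x i - y i.
Definition vopp (x : Vec) : Vec := fun i => - x i.
Definition vscal (c : R) (x : Vec) : Vec := fun i => c * x i.

Definition dot (n : nat) (s x : Vec) : R := sumR n (fun i => s i * x i).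

Definition mapply (n : nat) (A : Mat) (h : Vec) : Vec :=
  fun i => if Nat.ltb i n then sumR n (fun j => A i j * h j) else 0.

Definition quad (n : nat) (A : Mat) (h : Vec) : R := dot n (mapply n A h) h.

Definition mscal (c : R) (A : Mat) : Mat := fun i j => c * A i j.

Definition loewner_le (n : nat) (P Q : Mat) : Prop :=
  forall h, inE n h -> quad n P h <= quad n Q h.

Definition selfadj_op (n : nat) (A : Mat) : Prop :=
  forall h k, inE n h -> inE n k -> dot n (mapply n A h) k = dot n (mapply n A k) h.

Definition posdef_op (n : nat) (A : Mat) : Prop :=
  forall h, inE n h -> h <> vzero -> 0 < quad n A h.

Definition vnorm (n : nat) (x : Vec) : R := sqrt (dot n x x).
Definition vdist (n : nat) (x y : Vec) : R := vnorm n (vsub x y).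

Definition cone_int (n : nat) (K : Vec -> Prop) (x : Vec) : Prop :=
  inE n x /\ exists r, 0 < r /\ forall y, inE n y -> vdist n y x < r -> K y.

Definition closed_set (n : nat) (K : Vec -> Prop) : Prop :=
  forall y, inE n y ->
    (forall eps, 0 < eps -> exists z, K z /\ vdist n z y < eps) -> K y.

Definition regular_cone (n : nat) (K : Vec -> Prop) : Prop :=
  (forall x, K x -> inE n x) /\
  (forall x t, K x -> 0 <= t -> K (vscal t x)) /\
  closed_set n K /\
  (forall x y l, K x -> K y -> 0 <= l <= 1 ->
     K (vadd (vscal l x) (vscal (1 - l) y))) /\
  (forall x, K x -> K (vopp x) -> x = vzero) /\
  (exists x, cone_int n K x).

Definition cont_on (n : nat) (P : Vec -> Prop) (f : Vec -> R) : Prop :=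
  forall x, P x -> forall eps, 0 < eps -> exists del, 0 < del /\
    forall y, inE n y -> P y -> vdist n y x < del -> Rabs (f y - f x) < eps.

(* g is the gradient, Hs the Hessian and D3 x h = D^3 F(x)[h,h,h] of F on
   int K, all continuous there (F is C^3 on int K). *)
Definition derivs_on (n : nat) (U : Vec -> Prop) (F : Vec -> R) (g : Vec -> Vec)
  (Hs : Vec -> Mat) (D3 : Vec -> Vec -> R) : Prop :=
  (forall x h, U x -> inE n h ->
     derivable_pt_lim (fun t => F (vadd x (vscal t h))) 0 (dot n (g x) h)) /\
  (forall x h k, U x -> inE n h -> inE n k ->
     derivable_pt_lim (fun t => dot n (g (vadd x (vscal t h))) k) 0
       (dot n (mapply n (Hs x) h) k)) /\
  (forall x h, U x -> inE n h ->
     derivable_pt_lim (fun t => quad n (Hs (vadd x (vscal t h))) h) 0 (D3 x h)) /\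
  cont_on n U F /\
  (forall k, inE n k -> cont_on n U (fun x => dot n (g x) k)) /\
  (forall h k, inE n h -> inE n k -> cont_on n U (fun x => dot n (mapply n (Hs x) h) k)) /\
  (forall h, inE n h -> cont_on n U (fun x => D3 x h)).

Definition normal_barrier (n : nat) (K : Vec -> Prop) (F : Vec -> R)
  (g : Vec -> Vec) (Hs : Vec -> Mat) (nu : R) : Prop :=
  exists D3 : Vec -> Vec -> R,
  derivs_on n (cone_int n K) F g Hs D3 /\
  (* convexity (implicit in the 3/2 power) and self-concordance *)
  (forall x h, cone_int n K x -> inE n h -> 0 <= quad n (Hs x) h) /\
  (forall x h, cone_int n K x -> inE n h ->
     Rabs (D3 x h) <= 2 * (sqrt (quad n (Hs x) h)) ^ 3) /\
  (forall y, K y -> ~ cone_int n K y -> forall M, exists del, 0 < del /\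
     forall x, cone_int n K x -> vdist n x y < del -> M < F x) /\
  (* <grad F(x), [hess F(x)]^{-1} grad F(x)> <= nu (Hessian invertible) *)
  (forall x, cone_int n K x ->
     (forall z, inE n z -> (forall i, (i < n)%nat -> mapply n (Hs x) z i = 0) -> z = vzero) /\
     (forall z, inE n z -> (forall i, (i < n)%nat -> mapply n (Hs x) z i = g x i) ->
        dot n (g x) z <= nu)) /\
  (forall x tau, cone_int n K x -> 0 < tau ->
     F (vscal tau x) = F x - nu * ln tau).

From Stdlib Require Import Reals Lra Lia Psatz FunctionalExtensionality Classical.
From Coquelicot Require Import Coquelicot.
Open Scope R_scope.
Set Bullet Behavior "Strict Subproofs".

(* Logarithmic homogeneity gives [<F'(x), x> = - nu]; along a ray [x + t w]
   with [w] in int K, [F] stays bounded above (homogeneity plus convexity on the segment [x, w])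
   while convexity makes it grow like [t <F'(x), w>], so [<F'(x), w> <= 0] on K.  On the same
   ray, self-concordance makes [t |-> 1 / sqrt (F''(x + t w)[w, w])] 1-Lipschitz, and since
   [<F'(x + t w), w>] never becomes positive this forces [F''(x)[w, w] <= <F'(x), w>^2].
   Apply both facts to [w = u +- s h] whenever [s^2 <H h, h> <= 1]: as [0 <= - <F'(x), u> <= nu],
   the parallelogram law gives [s^2 F''(x)[h, h] <= 2 nu^2], that is [F''(x) <= 2 nu^2 H].
   The corollaries take for [H] a Hessian, whose unit Dikin ellipsoid lies in K: along its open
   segments self-concordance keeps [F] bounded, which rules out reaching the boundary. *)

Lemma sumR_ext n f g : (forall i, (i < n)%nat -> f i = g i) -> sumR n f = sumR n g.
Proof.
  induction n as [|n IH]; intros Hfg; simpl; [reflexivity|].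
  rewrite IH, Hfg; auto with arith.
Qed.

Lemma sumR_add n f g : sumR n (fun i => f i + g i) = sumR n f + sumR n g.
Proof. induction n as [|n IH]; simpl; [lra|rewrite IH; lra]. Qed.

Lemma sumR_scal n c f : sumR n (fun i => c * f i) = c * sumR n f.
Proof. induction n as [|n IH]; simpl; [lra|rewrite IH; lra]. Qed.

Lemma sumR_ge0 n f : (forall i, (i < n)%nat -> 0 <= f i) -> 0 <= sumR n f.
Proof.
  induction n as [|n IH]; intros Hf; simpl; [lra|].
  assert (0 <= f n) by auto with arith.
  assert (0 <= sumR n f) by auto with arith.
  lra.
Qed.

Ltac vec_ext := apply functional_extensionality; intro; unfold vadd, vsub, vscal, vzero.

Lemma vsub_vadd_vscal x y : vsub x y = vadd x (vscal (-1) y).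
Proof. vec_ext; ring. Qed.

Lemma inE_add n x y : inE n x -> inE n y -> inE n (vadd x y).
Proof. intros Hx Hy i Hi; unfold vadd; rewrite Hx, Hy; auto; ring. Qed.

Lemma inE_scal n c x : inE n x -> inE n (vscal c x).
Proof. intros Hx i Hi; unfold vscal; rewrite Hx; auto; ring. Qed.

Lemma inE_sub n x y : inE n x -> inE n y -> inE n (vsub x y).
Proof. intros; rewrite vsub_vadd_vscal; auto using inE_add, inE_scal. Qed.

Lemma dot_addl n s t x : dot n (vadd s t) x = dot n s x + dot n t x.
Proof. unfold dot, vadd; rewrite <- sumR_add; apply sumR_ext; intros; ring. Qed.

Lemma dot_addr n s x y : dot n s (vadd x y) = dot n s x + dot n s y.
Proof. unfold dot, vadd; rewrite <- sumR_add; apply sumR_ext; intros; ring. Qed.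

Lemma dot_scall n c s x : dot n (vscal c s) x = c * dot n s x.
Proof. unfold dot, vscal; rewrite <- sumR_scal; apply sumR_ext; intros; ring. Qed.

Lemma dot_scalr n s c x : dot n s (vscal c x) = c * dot n s x.
Proof. unfold dot, vscal; rewrite <- sumR_scal; apply sumR_ext; intros; ring. Qed.

Lemma dot_subr n s x y : dot n s (vsub x y) = dot n s x - dot n s y.
Proof. rewrite vsub_vadd_vscal, dot_addr, dot_scalr; ring. Qed.

Lemma dot_comm n x y : dot n x y = dot n y x.
Proof. unfold dot; apply sumR_ext; intros; ring. Qed.

Lemma dot_self_ge0 n x : 0 <= dot n x x.
Proof. unfold dot; apply sumR_ge0; intros; nra. Qed.

Lemma mapply_add n A x y : mapply n A (vadd x y) = vadd (mapply n A x) (mapply n A y).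
Proof.
  apply functional_extensionality; intro i; unfold mapply, vadd.
  destruct (Nat.ltb i n); [|ring].
  rewrite <- sumR_add; apply sumR_ext; intros; ring.
Qed.

Lemma mapply_scal n A c x : mapply n A (vscal c x) = vscal c (mapply n A x).
Proof.
  apply functional_extensionality; intro i; unfold mapply, vscal.
  destruct (Nat.ltb i n); [|ring].
  rewrite <- sumR_scal; apply sumR_ext; intros; ring.
Qed.

Lemma mapply_mscal n c A x : mapply n (mscal c A) x = vscal c (mapply n A x).
Proof.
  apply functional_extensionality; intro i; unfold mapply, mscal, vscal.
  destruct (Nat.ltb i n); [|ring].
  rewrite <- sumR_scal; apply sumR_ext; intros; ring.
Qed.

Lemma quad_scal n A c x : quad n A (vscal c x) = c ^ 2 * quad n A x.
Proof. unfold quad; rewrite mapply_scal, dot_scall, dot_scalr; ring. Qed.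

Lemma quad_mscal n c A x : quad n (mscal c A) x = c * quad n A x.
Proof. unfold quad; rewrite mapply_mscal, dot_scall; ring. Qed.

Lemma quad_add_scal n A x s y :
  quad n A (vadd x (vscal s y)) =
  quad n A x + s * (dot n (mapply n A x) y + dot n (mapply n A y) x) + s ^ 2 * quad n A y.
Proof.
  unfold quad; rewrite mapply_add, mapply_scal, !dot_addl, !dot_addr, !dot_scall, !dot_scalr.
  ring.
Qed.

Definition psd_op (n : nat) (A : Mat) : Prop := forall h, inE n h -> 0 <= quad n A h.

Lemma posdef_op_psd n A : posdef_op n A -> psd_op n A.
Proof.
  intros HA h Hh; destruct (classic (h = vzero)) as [->|Hnz]; [|left; auto].
  replace vzero with (vscal 0 vzero) by (vec_ext; ring).
  rewrite quad_scal; lra.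
Qed.

Lemma dot_sq_le n x y : dot n x y ^ 2 <= dot n x x * dot n y y.
Proof.
  set (a := dot n x x); set (b := dot n x y); set (c := dot n y y).
  assert (Ha : 0 <= a) by apply dot_self_ge0.
  assert (Hq : forall t, 0 <= a + 2 * t * b + t ^ 2 * c).
  { intro t; pose proof (dot_self_ge0 n (vadd x (vscal t y))) as H.
    rewrite dot_addl, !dot_addr, !dot_scall, !dot_scalr, (dot_comm n y x) in H.
    unfold a, b, c; nra. }
  destruct (Rlt_or_le 0 c) as [Hc|Hc].
  - (* evaluate the nonnegative quadratic at its minimiser [t = - b / c] *)
    specialize (Hq (- b / c)).
    replace (a + 2 * (- b / c) * b + (- b / c) ^ 2 * c) with ((a * c - b ^ 2) / c) in Hq
      by (field; lra).
    apply Rmult_le_compat_r with (r := c) in Hq; [|lra].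
    replace ((a * c - b ^ 2) / c * c) with (a * c - b ^ 2) in Hq by (field; lra).
    lra.
  - assert (Hb : b = 0).
    { destruct (Req_dec b 0) as [|Hb]; [assumption|].
      specialize (Hq (- (a + 1) / (2 * b))).
      replace (a + 2 * (- (a + 1) / (2 * b)) * b) with (-1) in Hq by (field; auto).
      set (t := - (a + 1) / (2 * b)) in Hq.
      assert (0 <= t ^ 2) by apply pow2_ge_0.
      nra. }
    assert (0 <= c) by apply dot_self_ge0.
    rewrite Hb; nra.
Qed.

Lemma dot_le_vnorm n x y : dot n x y <= vnorm n x * vnorm n y.
Proof.
  unfold vnorm; rewrite <- sqrt_mult_alt by apply dot_self_ge0.
  destruct (Rle_or_lt (dot n x y) 0).
  - pose proof (sqrt_pos (dot n x x * dot n y y)); lra.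
  - rewrite <- (sqrt_pow2 (dot n x y)) by lra.
    apply sqrt_le_1_alt, dot_sq_le.
Qed.

Lemma vnorm_scal n c x : vnorm n (vscal c x) = Rabs c * vnorm n x.
Proof.
  unfold vnorm; rewrite dot_scall, dot_scalr, <- Rmult_assoc.
  rewrite sqrt_mult_alt by nra.
  rewrite <- sqrt_Rsqr_abs; reflexivity.
Qed.

Lemma vnorm_triangle n x y : vnorm n (vadd x y) <= vnorm n x + vnorm n y.
Proof.
  pose proof (sqrt_pos (dot n x x)); pose proof (sqrt_pos (dot n y y)).
  unfold vnorm at 1; rewrite <- (sqrt_pow2 (vnorm n x + vnorm n y)) by (unfold vnorm; lra).
  apply sqrt_le_1_alt.
  rewrite dot_addl, !dot_addr, (dot_comm n y x).
  pose proof (dot_le_vnorm n x y); unfold vnorm in *.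
  pose proof (sqrt_sqrt _ (dot_self_ge0 n x)); pose proof (sqrt_sqrt _ (dot_self_ge0 n y)).
  nra.
Qed.

Lemma vdist_triangle n x y z : vdist n x z <= vdist n x y + vdist n y z.
Proof.
  unfold vdist; replace (vsub x z) with (vadd (vsub x y) (vsub y z)) by (vec_ext; ring).
  apply vnorm_triangle.
Qed.

Lemma vdist_refl n x : vdist n x x = 0.
Proof.
  unfold vdist; replace (vsub x x) with (vscal 0 x) by (vec_ext; ring).
  rewrite vnorm_scal, Rabs_R0; ring.
Qed.

Definition line (y h : Vec) (t : R) : Vec := vadd y (vscal t h).

Lemma line_0 y h : line y h 0 = y.
Proof. unfold line; vec_ext; ring. Qed.

Lemma line_shift y h t s : vadd (line y h t) (vscal s h) = line y h (t + s).
Proof. unfold line; vec_ext; ring. Qed.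

Lemma inE_line n y h t : inE n y -> inE n h -> inE n (line y h t).
Proof. intros; unfold line; auto using inE_add, inE_scal. Qed.

Lemma vdist_line n y h s t : vdist n (line y h s) (line y h t) = Rabs (s - t) * vnorm n h.
Proof.
  unfold vdist; replace (vsub (line y h s) (line y h t)) with (vscal (s - t) h)
    by (unfold line; vec_ext; ring).
  apply vnorm_scal.
Qed.

Lemma line_approach_left n y h T e : 0 < T -> 0 < e ->
  exists s, 0 <= s < T /\ vdist n (line y h s) (line y h T) < e.
Proof.
  intros HT He; set (N := vnorm n h); assert (HN : 0 <= N) by apply sqrt_pos.
  set (d := Rmin (T / 2) (e / (N + 1))).
  assert (Hd : 0 < d) by (apply Rmin_pos; apply Rdiv_lt_0_compat; lra).
  assert (HdT : d <= T / 2) by apply Rmin_l.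
  assert (HdN : d * (N + 1) <= e).
  { apply Rle_trans with (e / (N + 1) * (N + 1)).
    - apply Rmult_le_compat_r; [lra|apply Rmin_r].
    - right; field; lra. }
  exists (T - d); split; [lra|].
  rewrite vdist_line; replace (T - d - T) with (- d) by ring.
  rewrite Rabs_Ropp, Rabs_right by lra; fold N; nra.
Qed.

Lemma cone_int_mem n K x : cone_int n K x -> K x.
Proof. intros [Hx [r [Hr HK]]]; apply HK; [assumption|rewrite vdist_refl; lra]. Qed.

Lemma cone_int_inE n K x : cone_int n K x -> inE n x.
Proof. intros [Hx _]; exact Hx. Qed.

Lemma cone_int_open n K x : cone_int n K x ->
  exists r, 0 < r /\ forall y, inE n y -> vdist n y x < r -> cone_int n K y.
Proof.
  intros [Hx [r [Hr HK]]]; exists (r / 2); split; [lra|].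
  intros y Hy Hyx; split; [assumption|].
  exists (r / 2); split; [lra|]; intros z Hz Hzy.
  apply HK; [assumption|]; pose proof (vdist_triangle n z y x); lra.
Qed.

Lemma cone_int_line_open n K y h t : inE n y -> inE n h -> cone_int n K (line y h t) ->
  exists d, 0 < d /\ forall s, Rabs (s - t) < d -> cone_int n K (line y h s).
Proof.
  intros Hy Hh Ht; destruct (cone_int_open _ _ _ Ht) as [r [Hr Hopen]].
  set (N := vnorm n h); assert (HN : 0 <= N) by apply sqrt_pos.
  exists (r / (N + 1)); split; [apply Rdiv_lt_0_compat; lra|].
  intros s Hs; apply Hopen; [apply inE_line; assumption|].
  rewrite vdist_line; fold N.
  apply Rle_lt_trans with (r / (N + 1) * N).
  - apply Rmult_le_compat_r; lra.
  - apply Rmult_lt_reg_r with (N + 1); [lra|].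
    replace (r / (N + 1) * N * (N + 1)) with (r * N) by (field; lra); nra.
Qed.

Section RegularCone.

Variables (n : nat) (K : Vec -> Prop).
Hypothesis HK : regular_cone n K.

Lemma cone_inE x : K x -> inE n x.
Proof. destruct HK as [H _]; auto. Qed.

Lemma cone_scal x t : K x -> 0 <= t -> K (vscal t x).
Proof. destruct HK as [_ [H _]]; auto. Qed.

Lemma cone_closed y : inE n y ->
  (forall eps, 0 < eps -> exists z, K z /\ vdist n z y < eps) -> K y.
Proof. destruct HK as [_ [_ [H _]]]; exact (H y). Qed.

Lemma cone_add x y : K x -> K y -> K (vadd x y).
Proof.
  destruct HK as [_ [_ [_ [Hconv _]]]]; intros Hx Hy.
  replace (vadd x y) with (vadd (vscal (1 / 2) (vscal 2 x)) (vscal (1 - 1 / 2) (vscal 2 y)))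
    by (vec_ext; field).
  apply Hconv; try apply cone_scal; auto; lra.
Qed.

Lemma cone_int_scal x t : cone_int n K x -> 0 < t -> cone_int n K (vscal t x).
Proof.
  intros [Hx [r [Hr Hball]]] Ht; split; [apply inE_scal; assumption|].
  exists (t * r); split; [nra|]; intros y Hy Hyx.
  replace y with (vscal t (vscal (/ t) y)) by (vec_ext; field; lra).
  apply cone_scal; [|lra].
  apply Hball; [apply inE_scal; assumption|].
  unfold vdist in *.
  replace (vsub (vscal (/ t) y) x) with (vscal (/ t) (vsub y (vscal t x)))
    by (vec_ext; field; lra).
  rewrite vnorm_scal, Rabs_right by (left; apply Rinv_0_lt_compat; lra).
  apply Rmult_lt_reg_l with t; [lra|].
  rewrite <- Rmult_assoc, Rinv_r, Rmult_1_l by lra; exact Hyx.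
Qed.

Lemma cone_int_add x w : cone_int n K x -> K w -> cone_int n K (vadd x w).
Proof.
  intros [Hx [r [Hr Hball]]] Hw; pose proof (cone_inE w Hw) as Hwe.
  split; [apply inE_add; assumption|].
  exists r; split; [assumption|]; intros y Hy Hyx.
  replace y with (vadd (vsub y w) w) by (vec_ext; ring).
  apply cone_add; [|assumption].
  apply Hball; [apply inE_sub; assumption|].
  unfold vdist in *; replace (vsub (vsub y w) x) with (vsub y (vadd x w)) by (vec_ext; ring).
  exact Hyx.
Qed.

Lemma cone_int_ray x w t : cone_int n K x -> K w -> 0 <= t -> cone_int n K (line x w t).
Proof. intros; apply cone_int_add; [|apply cone_scal]; assumption. Qed.

Lemma cone_int_segment x w l : cone_int n K x -> cone_int n K w -> 0 <= l <= 1 ->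
  cone_int n K (line x (vsub w x) l).
Proof.
  intros Hx Hw Hl; destruct (Req_dec l 1) as [->|Hl1].
  - replace (line x (vsub w x) 1) with w by (unfold line; vec_ext; ring); exact Hw.
  - replace (line x (vsub w x) l) with (vadd (vscal (1 - l) x) (vscal l w))
      by (unfold line; vec_ext; ring).
    apply cone_int_add; [apply cone_int_scal; [assumption|lra]|].
    apply cone_scal; [apply (cone_int_mem n); assumption|lra].
Qed.

End RegularCone.

Lemma derivable_pt_lim_shift f t l :
  derivable_pt_lim (fun s => f (t + s)) 0 l -> derivable_pt_lim f t l.
Proof.
  intros Hd eps Heps; destruct (Hd eps Heps) as [del Hdel]; exists del.
  intros h Hh0 Hh; specialize (Hdel h Hh0 Hh).
  rewrite !Rplus_0_l, Rplus_0_r in Hdel; exact Hdel.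
Qed.

Lemma derivable_pt_lim_along_line (G : Vec -> R) y h t l :
  derivable_pt_lim (fun s => G (vadd (line y h t) (vscal s h))) 0 l ->
  derivable_pt_lim (fun s => G (line y h s)) t l.
Proof.
  intros Hd; apply derivable_pt_lim_shift.
  replace (fun s => G (line y h (t + s))) with (fun s => G (vadd (line y h t) (vscal s h)))
    by (apply functional_extensionality; intro s; rewrite line_shift; reflexivity).
  exact Hd.
Qed.

Lemma derivable_pt_lim_locally_eq f g x l d : 0 < d ->
  (forall y, Rabs (y - x) < d -> f y = g y) ->
  derivable_pt_lim f x l -> derivable_pt_lim g x l.
Proof.
  intros Hd Hfg Hf eps Heps; destruct (Hf eps Heps) as [del Hdel].
  assert (Hm : 0 < Rmin del d) by (apply Rmin_pos; [apply cond_pos|assumption]).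
  exists (mkposreal _ Hm); simpl; intros h Hh0 Hh.
  assert (Hdel' : Rabs h < del) by (apply Rlt_le_trans with (1 := Hh); apply Rmin_l).
  assert (Hd' : Rabs h < d) by (apply Rlt_le_trans with (1 := Hh); apply Rmin_r).
  rewrite <- !Hfg; [apply Hdel; assumption| |].
  - rewrite Rminus_diag, Rabs_R0; assumption.
  - replace (x + h - x) with h by ring; assumption.
Qed.

Lemma mvt_upper_bound f f' a b c : a <= b ->
  (forall t, a <= t <= b -> derivable_pt_lim f t (f' t)) ->
  (forall t, a <= t <= b -> f' t <= c) -> f b <= f a + c * (b - a).
Proof.
  intros Hab Hd Hc; destruct (Req_dec a b) as [->|Hne]; [lra|].
  destruct (MVT_cor2 f f' a b) as [t [Ht Hint]]; [lra|assumption|].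
  assert (f' t <= c) by (apply Hc; lra); nra.
Qed.

Lemma mvt_lower_bound f f' a b c : a <= b ->
  (forall t, a <= t <= b -> derivable_pt_lim f t (f' t)) ->
  (forall t, a <= t <= b -> c <= f' t) -> f a + c * (b - a) <= f b.
Proof.
  intros Hab Hd Hc; destruct (Req_dec a b) as [->|Hne]; [lra|].
  destruct (MVT_cor2 f f' a b) as [t [Ht Hint]]; [lra|assumption|].
  assert (c <= f' t) by (apply Hc; lra); nra.
Qed.

Definition convex_on (a b : R) (f f1 f2 : R -> R) : Prop :=
  forall t, a <= t <= b ->
    derivable_pt_lim f t (f1 t) /\ derivable_pt_lim f1 t (f2 t) /\ 0 <= f2 t.

Lemma convex_tangent_bounds f f1 f2 a b : a <= b -> convex_on a b f f1 f2 ->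
  f a + (b - a) * f1 a <= f b /\ f b <= f a + (b - a) * f1 b.
Proof.
  intros Hab Hconv.
  assert (Hmono : forall s t, a <= s <= t -> t <= b -> f1 s <= f1 t).
  { intros s t Hs Ht.
    assert (f1 s + 0 * (t - s) <= f1 t); [|lra].
    apply mvt_lower_bound with f2; [lra| |]; intros r Hr; apply Hconv; lra. }
  split.
  - assert (f a + f1 a * (b - a) <= f b); [|lra].
    apply mvt_lower_bound with f1; [lra| |]; intros t Ht; [apply Hconv; lra|].
    apply Hmono; lra.
  - assert (f b <= f a + f1 b * (b - a)); [|lra].
    apply mvt_upper_bound with f1; [lra| |]; intros t Ht; [apply Hconv; lra|].
    apply Hmono; lra.
Qed.

Lemma convex_below_chord f f1 f2 l : convex_on 0 1 f f1 f2 -> 0 <= l <= 1 ->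
  f l <= (1 - l) * f 0 + l * f 1.
Proof.
  intros Hconv Hl.
  destruct (convex_tangent_bounds f f1 f2 0 l) as [_ Hleft]; [lra|intros t Ht; apply Hconv; lra|].
  destruct (convex_tangent_bounds f f1 f2 l 1) as [Hright _]; [lra|intros t Ht; apply Hconv; lra|].
  nra.
Qed.

Lemma convex_bounded_deriv_le0 f f1 f2 M :
  (forall T, 0 <= T -> convex_on 0 T f f1 f2) -> (forall t, 0 <= t -> f t <= M) ->
  f1 0 <= 0.
Proof.
  intros Hconv Hbound; destruct (Rle_or_lt (f1 0) 0) as [|Hpos]; [assumption|exfalso].
  (* the tangent at 0 grows linearly past the bound [M] *)
  set (T := (M - f 0 + 1) / f1 0).
  assert (HT : 0 <= T).
  { pose proof (Hbound 0 (Rle_refl 0)); apply Rle_mult_inv_pos; lra. }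
  destruct (convex_tangent_bounds f f1 f2 0 T HT (Hconv T HT)) as [Htan _].
  replace ((T - 0) * f1 0) with (M - f 0 + 1) in Htan by (unfold T; field; lra).
  pose proof (Hbound T HT); lra.
Qed.

Lemma le_of_second_derivative_le f f1 f2 s C : 0 <= s <= 1 -> 0 <= C ->
  (forall t, 0 <= t <= s ->
     derivable_pt_lim f t (f1 t) /\ derivable_pt_lim f1 t (f2 t) /\ f2 t <= C) ->
  f s <= f 0 + Rabs (f1 0) + C.
Proof.
  intros Hs HC Hd.
  assert (Hf1 : forall t, 0 <= t <= s -> f1 t <= Rabs (f1 0) + C).
  { intros t Ht.
    assert (f1 t <= f1 0 + C * (t - 0))
      by (apply mvt_upper_bound with f2; [lra| |]; intros r Hr; apply Hd; lra).
    pose proof (Rle_abs (f1 0)); nra. }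
  assert (f s <= f 0 + (Rabs (f1 0) + C) * (s - 0))
    by (apply mvt_upper_bound with f1; [lra| |]; intros r Hr; [apply Hd|apply Hf1]; lra).
  pose proof (Rabs_pos (f1 0)); nra.
Qed.

Lemma first_exit_time (P : R -> Prop) t1 : 0 <= t1 -> P 0 -> ~ P t1 ->
  (forall t, P t -> exists d, 0 < d /\ forall s, Rabs (s - t) < d -> P s) ->
  exists T, 0 < T <= t1 /\ (forall s, 0 <= s < T -> P s) /\ ~ P T.
Proof.
  intros Ht1 HP0 HPt1 Hopen.
  set (E := fun t => 0 <= t <= t1 /\ forall s, 0 <= s <= t -> P s).
  assert (HE0 : E 0) by (split; [lra|intros s Hs; replace s with 0 by lra; assumption]).
  destruct (completeness E) as [T [Hub Hlub]];
    [exists t1; intros t [Ht _]; lra|exists 0; assumption|].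
  assert (HT0 : 0 <= T) by (apply Hub; assumption).
  assert (HTt1 : T <= t1) by (apply Hlub; intros t [Ht _]; lra).
  assert (Hbefore : forall s, 0 <= s < T -> P s).
  { intros s Hs; apply NNPP; intro HnP.
    assert (T <= s); [|lra].
    apply Hlub; intros t [Ht HPt]; destruct (Rle_or_lt t s) as [|Hst]; [assumption|].
    exfalso; apply HnP, HPt; lra. }
  assert (HnPT : ~ P T).
  { intro HPT; destruct (Hopen T HPT) as [d [Hd Hnear]].
    destruct (Req_dec T t1) as [<-|HTne]; [contradiction|].
    set (t' := Rmin t1 (T + d / 2)).
    assert (HTt' : T < t') by (apply Rmin_glb_lt; lra).
    assert (Ht'd : t' <= T + d / 2) by apply Rmin_r.
    assert (E t').
    { split; [split; [lra|apply Rmin_l]|].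
      intros s Hs; destruct (Rlt_or_le s T); [apply Hbefore; lra|].
      apply Hnear; rewrite Rabs_right; lra. }
    assert (t' <= T) by (apply Hub; assumption); lra. }
  exists T; split; [|split; assumption].
  split; [|assumption].
  destruct (Req_dec T 0) as [HT|]; [|lra].
  rewrite HT in HnPT; contradiction.
Qed.

Lemma le_mul_of_forall_sq_le Q q c : 0 <= Q -> 0 <= q ->
  (forall s, s ^ 2 * q <= 1 -> s ^ 2 * Q <= c) -> Q <= c * q.
Proof.
  intros HQ Hq Hs; destruct (Rlt_or_le 0 q) as [Hqpos|Hq0].
  - specialize (Hs (/ sqrt q)).
    rewrite pow_inv, pow2_sqrt in Hs by lra.
    rewrite Rinv_l in Hs by lra.
    specialize (Hs (Rle_refl 1)).
    apply Rmult_le_reg_l with (/ q); [apply Rinv_0_lt_compat; assumption|].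
    replace (/ q * (c * q)) with c by (field; lra); assumption.
  - replace q with 0 in * by lra; rewrite Rmult_0_r.
    apply Rnot_lt_le; intro HQpos.
    set (s := sqrt ((Rabs c + 1) / Q)).
    assert (Hs2 : s ^ 2 = (Rabs c + 1) / Q)
      by (apply pow2_sqrt, Rle_mult_inv_pos; [pose proof (Rabs_pos c); lra|assumption]).
    specialize (Hs s); rewrite Hs2 in Hs.
    replace ((Rabs c + 1) / Q * Q) with (Rabs c + 1) in Hs by (field; lra).
    pose proof (Rle_abs c); lra.
Qed.

Definition self_concordant_on (P : R -> Prop) (q dq : R -> R) : Prop :=
  forall t, P t -> derivable_pt_lim q t (dq t) /\ 0 <= q t /\ Rabs (dq t) <= 2 * sqrt (q t) ^ 3.

Lemma derivable_pt_lim_invsqrt_shift q t d eps : derivable_pt_lim q t d -> 0 < q t + eps ->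
  derivable_pt_lim (fun s => / sqrt (q s + eps)) t (- d / (2 * sqrt (q t + eps) ^ 3)).
Proof.
  intros Hd Hpos; apply is_derive_Reals in Hd; apply is_derive_Reals.
  assert (Hs : 0 < sqrt (q t + eps)) by (apply sqrt_lt_R0; assumption).
  auto_derive.
  - repeat split; [exists d; assumption|assumption|lra].
  - replace (Derive (fun x => q x) t) with d by (symmetry; apply is_derive_unique; exact Hd).
    field; lra.
Qed.

(* [t |-> 1 / sqrt q(t)] is 1-Lipschitz; [eps] keeps it differentiable where [q] vanishes. *)
Lemma invsqrt_self_concordant_lipschitz q dq a b eps : a <= b -> 0 < eps ->
  self_concordant_on (fun t => a <= t <= b) q dq ->
  Rabs (/ sqrt (q b + eps) - / sqrt (q a + eps)) <= b - a.
Proof.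
  intros Hab Heps Hsc.
  destruct (MVT_abs (fun s => / sqrt (q s + eps))
              (fun s => - dq s / (2 * sqrt (q s + eps) ^ 3)) a b) as [c [Hc Hcab]].
  { rewrite Rmin_left, Rmax_right by assumption; intros c Hc.
    destruct (Hsc c Hc) as [Hd [Hq _]].
    apply derivable_pt_lim_invsqrt_shift; [assumption|lra]. }
  rewrite Rmin_left, Rmax_right in Hcab by assumption.
  rewrite Hc, (Rabs_right (b - a)) by lra.
  destruct (Hsc c Hcab) as [_ [Hq Hdq]].
  set (S := sqrt (q c + eps)).
  assert (HS : 0 < S) by (apply sqrt_lt_R0; lra).
  assert (Hmono : sqrt (q c) ^ 3 <= S ^ 3)
    by (apply pow_incr; split; [apply sqrt_pos|apply sqrt_le_1_alt; lra]).
  assert (Hslope : Rabs (- dq c / (2 * S ^ 3)) <= 1).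
  { unfold Rdiv; rewrite Rabs_mult, Rabs_Ropp, Rabs_inv, (Rabs_right (2 * S ^ 3))
      by (pose proof (pow_lt S 3 HS); lra).
    apply Rmult_le_reg_r with (2 * S ^ 3); [pose proof (pow_lt S 3 HS); lra|].
    rewrite Rmult_assoc, Rinv_l by (pose proof (pow_lt S 3 HS); lra); lra. }
  apply Rmult_le_compat_r with (r := b - a) in Hslope; lra.
Qed.

Lemma self_concordant_bounded_near_start q dq T t1 : 0 <= t1 < 1 -> T <= t1 -> q 0 <= 1 ->
  self_concordant_on (fun t => 0 <= t < T) q dq ->
  forall s, 0 <= s < T -> q s <= 4 / (1 - t1) ^ 2.
Proof.
  intros Ht1 HT Hq0 Hsc s Hs.
  (* [eps] is chosen so that [1 / sqrt (1 + eps) = (1 + t1) / 2] *)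
  set (eps := 4 / (1 + t1) ^ 2 - 1).
  assert (Heps : 0 < eps).
  { assert (Hsq : 1 * (1 + t1) ^ 2 < 4 / (1 + t1) ^ 2 * (1 + t1) ^ 2).
    { replace (4 / (1 + t1) ^ 2 * (1 + t1) ^ 2) with 4 by (field; lra); nra. }
    unfold eps; apply Rmult_lt_reg_r in Hsq; nra. }
  assert (Hlip : Rabs (/ sqrt (q s + eps) - / sqrt (q 0 + eps)) <= s - 0)
    by (apply invsqrt_self_concordant_lipschitz with dq; [lra|assumption|];
        intros t Ht; apply Hsc; lra).
  assert (Hstart : (1 + t1) / 2 <= / sqrt (q 0 + eps)).
  { destruct (Hsc 0 ltac:(lra)) as [_ [Hq0pos _]].
    replace ((1 + t1) / 2) with (/ sqrt (1 + eps)).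
    - apply Rinv_le_contravar; [apply sqrt_lt_R0; lra|apply sqrt_le_1_alt; lra].
    - replace (1 + eps) with ((2 / (1 + t1)) ^ 2) by (unfold eps; field; lra).
      rewrite sqrt_pow2 by (apply Rle_mult_inv_pos; lra); field; lra. }
  destruct (Hsc s Hs) as [_ [Hqs _]].
  set (S := sqrt (q s + eps)) in *.
  assert (HS : 0 < S) by (apply sqrt_lt_R0; lra).
  assert (HSS : S * S = q s + eps) by (apply sqrt_sqrt; lra).
  assert (Hinv : (1 - t1) / 2 <= / S).
  { rewrite Rabs_minus_sym in Hlip; pose proof (Rle_abs (/ sqrt (q 0 + eps) - / S)); lra. }
  assert (HSle : S <= 2 / (1 - t1)).
  { replace S with (/ / S) by (field; lra).
    replace (2 / (1 - t1)) with (/ ((1 - t1) / 2)) by (field; lra).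
    apply Rinv_le_contravar; [apply Rdiv_lt_0_compat; lra|assumption]. }
  replace (4 / (1 - t1) ^ 2) with (2 / (1 - t1) * (2 / (1 - t1))) by (field; lra).
  assert (S * S <= 2 / (1 - t1) * (2 / (1 - t1))) by (apply Rmult_le_compat; lra).
  lra.
Qed.

Lemma self_concordant_ray_lower_bound q dq eps t : 0 < eps -> 0 <= t ->
  self_concordant_on (fun s => 0 <= s) q dq ->
  let A := sqrt (q 0 + eps) in A ^ 2 / (1 + t * A) ^ 2 <= q t + eps.
Proof.
  intros Heps Ht Hsc A.
  destruct (Hsc 0 (Rle_refl 0)) as [_ [Hq0 _]]; destruct (Hsc t Ht) as [_ [Hqt _]].
  assert (HA : 0 < A) by (apply sqrt_lt_R0; lra).
  assert (HAA : A * A = q 0 + eps) by (apply sqrt_sqrt; lra).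
  assert (Hlip : Rabs (/ sqrt (q t + eps) - / A) <= t - 0)
    by (apply invsqrt_self_concordant_lipschitz with dq; [lra|assumption|];
        intros s Hs; apply Hsc; lra).
  set (S := sqrt (q t + eps)) in *.
  assert (HS : 0 < S) by (apply sqrt_lt_R0; lra).
  assert (HSS : S * S = q t + eps) by (apply sqrt_sqrt; lra).
  assert (HAS : A / (1 + t * A) <= S).
  { pose proof (Rle_abs (/ S - / A)).
    apply Rmult_le_reg_r with ((1 + t * A) / (A * S)); [apply Rdiv_lt_0_compat; nra|].
    replace (A / (1 + t * A) * ((1 + t * A) / (A * S))) with (/ S) by (field; nra).
    replace (S * ((1 + t * A) / (A * S))) with (/ A + t) by (field; lra).
    lra. }
  rewrite <- HSS.
  replace (A ^ 2 / (1 + t * A) ^ 2) with (A / (1 + t * A) * (A / (1 + t * A))) by (field; nra).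
  assert (0 <= A / (1 + t * A)) by (apply Rle_mult_inv_pos; nra).
  apply Rmult_le_compat; lra.
Qed.

Lemma self_concordant_ray_estimate f1 q dq eps T : 0 < eps -> 0 <= T ->
  self_concordant_on (fun s => 0 <= s) q dq ->
  (forall t, 0 <= t -> derivable_pt_lim f1 t (q t)) ->
  let A := sqrt (q 0 + eps) in f1 0 + A - A / (1 + T * A) - eps * T <= f1 T.
Proof.
  intros Heps HT Hsc Hf1 A.
  destruct (Hsc 0 (Rle_refl 0)) as [_ [Hq0 _]].
  assert (HA : 0 < A) by (apply sqrt_lt_R0; lra).
  (* [f1 t + A / (1 + t A) + eps t] is nondecreasing *)
  set (G := fun s => f1 s + (A / (1 + s * A) + eps * s)).
  assert (HG : G 0 + 0 * (T - 0) <= G T).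
  { apply mvt_lower_bound with (fun s => q s + (- A ^ 2 / (1 + s * A) ^ 2 + eps)); [assumption| |].
    - intros s Hs; apply derivable_pt_lim_plus; [apply Hf1; lra|].
      apply is_derive_Reals; auto_derive; [nra|field; nra].
    - intros s Hs.
      pose proof (self_concordant_ray_lower_bound q dq eps s Heps (proj1 Hs) Hsc) as Hlow.
      fold A in Hlow.
      replace (- A ^ 2 / (1 + s * A) ^ 2) with (- (A ^ 2 / (1 + s * A) ^ 2)) by (field; nra).
      lra. }
  unfold G in HG.
  replace (A / (1 + 0 * A)) with A in HG by (field; lra).
  lra.
Qed.

Lemma self_concordant_ray_bound f1 q dq :
  self_concordant_on (fun t => 0 <= t) q dq ->
  (forall t, 0 <= t -> derivable_pt_lim f1 t (q t) /\ f1 t <= 0) ->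
  q 0 <= f1 0 ^ 2.
Proof.
  intros Hsc Hf1.
  destruct (Hsc 0 (Rle_refl 0)) as [_ [Hq0 _]].
  set (a := sqrt (q 0)); set (b := - f1 0).
  assert (Hb : 0 <= b) by (unfold b; pose proof (proj2 (Hf1 0 (Rle_refl 0))); lra).
  assert (Hab : a <= b).
  { apply Rnot_lt_le; intro Hlt.
    (* the estimate with [T = 2 / (a - b)] and [eps T = (a - b) / 4]
       gives [b >= a - 3 (a - b) / 4] *)
    set (d := a - b); set (T := 2 / d); set (eps := d / (4 * T)).
    assert (HT : 0 < T) by (apply Rdiv_lt_0_compat; unfold d; lra).
    assert (Heps : 0 < eps) by (apply Rdiv_lt_0_compat; unfold d; lra).
    pose proof (self_concordant_ray_estimate f1 q dq eps T Heps (Rlt_le _ _ HT) Hsc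
                  (fun t Ht => proj1 (Hf1 t Ht))) as Hest.
    set (A := sqrt (q 0 + eps)) in Hest.
    assert (HaA : a <= A) by (apply sqrt_le_1_alt; lra).
    assert (HA : 0 <= A) by apply sqrt_pos.
    assert (Htail : A / (1 + T * A) <= d / 2).
    { apply Rmult_le_reg_r with (1 + T * A); [nra|].
      replace (A / (1 + T * A) * (1 + T * A)) with A by (field; nra).
      replace (d / 2 * (1 + T * A)) with (d / 2 + A) by (unfold T; field; unfold d; lra).
      unfold d; lra. }
    assert (HepsT : eps * T = d / 4) by (unfold eps; field; lra).
    pose proof (proj2 (Hf1 T (Rlt_le _ _ HT))) as HfT; unfold d in *; unfold b in *; lra. }
  replace (q 0) with (a ^ 2) by (apply pow2_sqrt; assumption).
  replace (f1 0 ^ 2) with (b ^ 2) by (unfold b; ring).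
  apply pow_incr; split; [apply sqrt_pos|assumption].
Qed.

Section NormalBarrier.

Variables (n : nat) (K : Vec -> Prop) (F : Vec -> R) (g : Vec -> Vec) (Hs : Vec -> Mat) (nu : R).
Hypotheses (HK : regular_cone n K) (HB : normal_barrier n K F g Hs nu).

Lemma barrier_hess_psd x : cone_int n K x -> psd_op n (Hs x).
Proof. destruct HB as [_ [_ [Hpsd _]]]; intros Hx h; apply Hpsd; assumption. Qed.

Lemma barrier_homogeneous x tau : cone_int n K x -> 0 < tau ->
  F (vscal tau x) = F x - nu * ln tau.
Proof. destruct HB as [_ [_ [_ [_ [_ [_ Hhom]]]]]]; apply Hhom. Qed.

Lemma barrier_blows_up y : K y -> ~ cone_int n K y -> forall M, exists del, 0 < del /\
  forall x, cone_int n K x -> vdist n x y < del -> M < F x.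
Proof. destruct HB as [_ [_ [_ [_ [Hbar _]]]]]; apply Hbar. Qed.

Lemma barrier_line_deriv y h t : inE n h -> cone_int n K (line y h t) ->
  derivable_pt_lim (fun s => F (line y h s)) t (dot n (g (line y h t)) h).
Proof.
  destruct HB as [_ [[Hd1 _] _]]; intros Hh Ht.
  apply derivable_pt_lim_along_line; apply Hd1; assumption.
Qed.

Lemma barrier_line_grad_deriv y h t : inE n h -> cone_int n K (line y h t) ->
  derivable_pt_lim (fun s => dot n (g (line y h s)) h) t (quad n (Hs (line y h t)) h).
Proof.
  destruct HB as [_ [[_ [Hd2 _]] _]]; intros Hh Ht.
  apply (derivable_pt_lim_along_line (fun z => dot n (g z) h)); apply Hd2; assumption.
Qed.

Lemma barrier_line_convex y h a b : inE n h ->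
  (forall t, a <= t <= b -> cone_int n K (line y h t)) ->
  convex_on a b (fun t => F (line y h t)) (fun t => dot n (g (line y h t)) h)
    (fun t => quad n (Hs (line y h t)) h).
Proof.
  intros Hh Hint t Ht; split; [|split].
  - apply barrier_line_deriv; auto.
  - apply barrier_line_grad_deriv; auto.
  - apply barrier_hess_psd; auto.
Qed.

Lemma barrier_line_self_concordant y h (P : R -> Prop) : inE n h ->
  (forall t, P t -> cone_int n K (line y h t)) ->
  exists dq, self_concordant_on P (fun t => quad n (Hs (line y h t)) h) dq.
Proof.
  destruct HB as [D3 [[_ [_ [Hd3 _]]] [Hpsd [Hsc _]]]]; intros Hh Hint.
  exists (fun t => D3 (line y h t) h); intros t Ht; split; [|split].
  - apply (derivable_pt_lim_along_line (fun z => quad n (Hs z) h)); apply Hd3; auto.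
  - apply Hpsd; auto.
  - apply Hsc; auto.
Qed.

Lemma barrier_grad_dot_self x : cone_int n K x -> dot n (g x) x = - nu.
Proof.
  intros Hx; pose proof (cone_int_inE _ _ _ Hx) as Hxe.
  (* differentiate [F ((1 + t) x) = F x - nu ln (1 + t)] at [t = 0] *)
  apply (uniqueness_limite (fun t => F (line x x t)) 0).
  - pose proof (barrier_line_deriv x x 0 Hxe) as Hd; rewrite line_0 in Hd; exact (Hd Hx).
  - apply derivable_pt_lim_locally_eq with (f := fun t => F x - nu * ln (1 + t)) (d := 1);
      [lra| |].
    + intros s Hs0; rewrite Rminus_0_r in Hs0; apply Rabs_def2 in Hs0.
      replace (line x x s) with (vscal (1 + s) x) by (unfold line; vec_ext; ring).
      rewrite barrier_homogeneous; [reflexivity|assumption|lra].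
    + apply is_derive_Reals; auto_derive; [lra|field; lra].
Qed.

Lemma barrier_nu_ge0 : 0 <= nu.
Proof.
  destruct HK as [_ [_ [_ [_ [_ [x Hx]]]]]]; pose proof (cone_int_inE _ _ _ Hx) as Hxe.
  (* convexity of [t |-> F ((1 + t) x)] between [t = 0] and [t = 1] gives [nu ln 2 <= nu] *)
  assert (Hseg : forall t, 0 <= t <= 1 -> cone_int n K (line x x t)).
  { intros t Ht; replace (line x x t) with (vscal (1 + t) x) by (unfold line; vec_ext; ring).
    apply cone_int_scal; [assumption|assumption|lra]. }
  destruct (convex_tangent_bounds _ _ _ 0 1 ltac:(lra)
              (barrier_line_convex x x 0 1 Hxe Hseg)) as [Htan _].
  rewrite line_0, barrier_grad_dot_self in Htan by assumption.
  replace (line x x 1) with (vscal 2 x) in Htan by (unfold line; vec_ext; ring).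
  rewrite barrier_homogeneous in Htan by (assumption || lra).
  assert (ln 2 < 1).
  { rewrite <- ln_exp with 1; apply ln_increasing; [lra|].
    pose proof (exp_ineq1 1); lra. }
  nra.
Qed.

Lemma barrier_bounded_on_ray x w t : cone_int n K x -> cone_int n K w -> 0 <= t ->
  F (line x w t) <= Rabs (F x) + Rabs (F w).
Proof.
  intros Hx Hw Ht.
  pose proof (cone_int_inE _ _ _ Hx) as Hxe; pose proof (cone_int_inE _ _ _ Hw) as Hwe.
  (* [x + t w = (1 + t) (x + l (w - x))] with [l = t / (1 + t)] on the segment [x, w] *)
  set (l := t / (1 + t)).
  assert (Hl : 0 <= l <= 1).
  { unfold l; split; [apply Rle_mult_inv_pos; lra|].
    apply Rmult_le_reg_r with (1 + t); [lra|].
    unfold Rdiv; rewrite Rmult_assoc, Rinv_l; lra. }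
  replace (line x w t) with (vscal (1 + t) (line x (vsub w x) l))
    by (unfold line, l; vec_ext; field; lra).
  rewrite barrier_homogeneous by (try apply cone_int_segment; auto; lra).
  assert (Hchord : F (line x (vsub w x) l) <= (1 - l) * F (line x (vsub w x) 0)
                                            + l * F (line x (vsub w x) 1)).
  { eapply (convex_below_chord (fun s => F (line x (vsub w x) s))); [|exact Hl].
    apply barrier_line_convex; [apply inE_sub; assumption|].
    intros s Hs0; apply cone_int_segment; assumption. }
  rewrite line_0 in Hchord.
  replace (line x (vsub w x) 1) with w in Hchord by (unfold line; vec_ext; ring).
  assert (0 <= ln (1 + t)) by (rewrite <- ln_1; apply ln_le; lra).
  pose proof barrier_nu_ge0; pose proof (Rle_abs (F x)); pose proof (Rle_abs (F w)).
  pose proof (Rabs_pos (F x)); pose proof (Rabs_pos (F w)).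
  nra.
Qed.

Lemma barrier_grad_dot_int_le0 x w : cone_int n K x -> cone_int n K w -> dot n (g x) w <= 0.
Proof.
  intros Hx Hw; pose proof (cone_int_inE _ _ _ Hw) as Hwe.
  replace (dot n (g x) w) with (dot n (g (line x w 0)) w) by (rewrite line_0; reflexivity).
  apply (convex_bounded_deriv_le0 (fun t => F (line x w t)) (fun t => dot n (g (line x w t)) w)
           (fun t => quad n (Hs (line x w t)) w) (Rabs (F x) + Rabs (F w))).
  - intros T HT; apply barrier_line_convex; [assumption|].
    intros t Ht; apply cone_int_ray; [assumption|assumption| |lra].
    apply (cone_int_mem n); assumption.
  - intros t Ht; apply barrier_bounded_on_ray; assumption.
Qed.

Lemma barrier_grad_dot_le0 x w : cone_int n K x -> K w -> dot n (g x) w <= 0.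
Proof.
  intros Hx Hw.
  (* [e x + w] is interior for every [e > 0], and [<g x, e x> = - e nu] *)
  assert (He : forall e, 0 < e -> dot n (g x) w <= e * nu).
  { intros e He.
    pose proof (barrier_grad_dot_int_le0 x (vadd (vscal e x) w) Hx
                  (cone_int_add _ _ HK _ _ (cone_int_scal _ _ HK _ _ Hx He) Hw)) as Hle.
    rewrite dot_addr, dot_scalr, barrier_grad_dot_self in Hle by assumption; lra. }
  pose proof barrier_nu_ge0.
  apply Rnot_lt_le; intro Hpos.
  specialize (He (dot n (g x) w / (2 * (nu + 1))) ltac:(apply Rdiv_lt_0_compat; lra)).
  assert (dot n (g x) w / (2 * (nu + 1)) * nu < dot n (g x) w); [|lra].
  apply Rmult_lt_reg_r with (2 * (nu + 1)); [lra|].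
  replace (dot n (g x) w / (2 * (nu + 1)) * nu * (2 * (nu + 1))) with (dot n (g x) w * nu)
    by (field; lra).
  nra.
Qed.

Lemma barrier_hess_le_grad_dot_sq x w : cone_int n K x -> K w ->
  quad n (Hs x) w <= dot n (g x) w ^ 2.
Proof.
  intros Hx Hw; pose proof (cone_inE _ _ HK _ Hw) as Hwe.
  assert (Hray : forall t, 0 <= t -> cone_int n K (line x w t))
    by (intros; apply cone_int_ray; assumption).
  destruct (barrier_line_self_concordant x w (fun t => 0 <= t) Hwe Hray) as [dq Hsc].
  rewrite <- (line_0 x w) at 1 2.
  apply (self_concordant_ray_bound (fun t => dot n (g (line x w t)) w) _ _ Hsc).
  intros t Ht; split; [apply barrier_line_grad_deriv; auto|].
  apply barrier_grad_dot_le0; auto.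
Qed.

Lemma barrier_bounded_on_dikin_segment u h T t1 : inE n h -> quad n (Hs u) h <= 1 ->
  0 <= t1 < 1 -> T <= t1 -> (forall s, 0 <= s < T -> cone_int n K (line u h s)) ->
  exists M, forall s, 0 <= s < T -> F (line u h s) <= M.
Proof.
  intros Hh Hu Ht1 HT Hseg.
  destruct (barrier_line_self_concordant u h (fun t => 0 <= t < T) Hh Hseg) as [dq Hsc].
  assert (Hq0 : quad n (Hs (line u h 0)) h <= 1) by (rewrite line_0; exact Hu).
  pose proof (self_concordant_bounded_near_start _ dq T t1 Ht1 HT Hq0 Hsc) as Hq.
  exists (F (line u h 0) + Rabs (dot n (g (line u h 0)) h) + 4 / (1 - t1) ^ 2).
  intros s Hs0.
  apply (le_of_second_derivative_le (fun t => F (line u h t)) (fun t => dot n (g (line u h t)) h)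
           (fun t => quad n (Hs (line u h t)) h)); [lra| |].
  - apply Rle_mult_inv_pos; [lra|apply pow_lt; lra].
  - intros t Ht; repeat split;
      [apply barrier_line_deriv| apply barrier_line_grad_deriv| apply Hq];
      try apply Hseg; auto; lra.
Qed.

Lemma dikin_segment_int u h t : cone_int n K u -> inE n h -> quad n (Hs u) h <= 1 ->
  0 <= t < 1 -> cone_int n K (line u h t).
Proof.
  intros Hu Hh Huh Ht; pose proof (cone_int_inE _ _ _ Hu) as Hue.
  apply NNPP; intro Hnot.
  (* at the first exit time [T] the segment meets the boundary, where [F] must blow up *)
  destruct (first_exit_time (fun s => cone_int n K (line u h s)) t) as
      [T [[HT0 HTt] [Hbefore HnotT]]];
    [lra|rewrite line_0; assumption|assumption|intros; apply cone_int_line_open; assumption|].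
  assert (HKT : K (line u h T)).
  { apply (cone_closed _ _ HK); [apply inE_line; assumption|].
    intros e He; destruct (line_approach_left n u h T e HT0 He) as [s [Hs0 Hd]].
    exists (line u h s); split; [apply (cone_int_mem n), Hbefore|]; assumption. }
  destruct (barrier_bounded_on_dikin_segment u h T t Hh Huh Ht HTt Hbefore) as [M HM].
  destruct (barrier_blows_up _ HKT HnotT M) as [del [Hdel Hnear]].
  destruct (line_approach_left n u h T del HT0 Hdel) as [s [Hs0 Hd]].
  pose proof (Hnear _ (Hbefore s Hs0) Hd); pose proof (HM s Hs0); lra.
Qed.

Lemma dikin_ellipsoid_subset u w : cone_int n K u -> inE n w -> quad n (Hs u) (vsub w u) <= 1 ->
  K w.
Proof.
  intros Hu Hw Huw; pose proof (cone_int_inE _ _ _ Hu) as Hue.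
  replace w with (line u (vsub w u) 1) by (unfold line; vec_ext; ring).
  apply (cone_closed _ _ HK); [apply inE_line; auto using inE_sub|].
  intros e He; destruct (line_approach_left n u (vsub w u) 1 e ltac:(lra) He) as [s [Hs0 Hd]].
  exists (line u (vsub w u) s); split; [|assumption].
  apply (cone_int_mem n), dikin_segment_int; auto using inE_sub.
Qed.

Lemma barrier_hess_le_ellipsoid H u x : psd_op n H -> inE n u ->
  (forall w, inE n w -> quad n H (vsub w u) <= 1 -> K w) ->
  cone_int n K x -> 0 <= dot n (g x) (vsub u x) ->
  loewner_le n (Hs x) (mscal (2 * nu ^ 2) H).
Proof.
  intros HH Hu Hell Hx Hgx h Hh; rewrite quad_mscal.
  assert (Hline : forall s, s ^ 2 * quad n H h <= 1 -> K (line u h s)).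
  { intros s Hs0; apply Hell; [apply inE_line; assumption|].
    replace (vsub (line u h s) u) with (vscal s h) by (unfold line; vec_ext; ring).
    rewrite quad_scal; assumption. }
  set (a := dot n (g x) u).
  assert (Ha : - nu <= a <= 0).
  { assert (Ku : K u) by (rewrite <- (line_0 u h); apply Hline; lra).
    pose proof (barrier_grad_dot_le0 x u Hx Ku).
    rewrite dot_subr, barrier_grad_dot_self in Hgx by assumption.
    unfold a; lra. }
  apply le_mul_of_forall_sq_le; [apply barrier_hess_psd; assumption|apply HH; assumption|].
  intros s Hs0.
  assert (Hs0' : (- s) ^ 2 * quad n H h <= 1) by (replace ((- s) ^ 2) with (s ^ 2) by ring; lra).
  (* at [w = u +- s h]: [<g x, w> <= 0] and [<Hs x w, w> <= <g x, w>^2]; adding the two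
     quadratic bounds cancels the cross terms *)
  pose proof (barrier_grad_dot_le0 x _ Hx (Hline s Hs0)) as Hg1.
  pose proof (barrier_grad_dot_le0 x _ Hx (Hline (- s) Hs0')) as Hg2.
  pose proof (barrier_hess_le_grad_dot_sq x _ Hx (Hline s Hs0)) as HQ1.
  pose proof (barrier_hess_le_grad_dot_sq x _ Hx (Hline (- s) Hs0')) as HQ2.
  unfold line in *; rewrite dot_addr, dot_scalr in Hg1, Hg2, HQ1, HQ2.
  rewrite !quad_add_scal in HQ1, HQ2.
  pose proof (barrier_hess_psd x Hx u Hu).
  fold a in Hg1, Hg2, HQ1, HQ2; set (b := dot n (g x) h) in *.
  assert (s ^ 2 * b ^ 2 <= a ^ 2).
  { replace (s ^ 2 * b ^ 2) with (a ^ 2 - (- (a + s * b)) * (- (a - s * b))) by ring.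
    assert (0 <= (- (a + s * b)) * (- (a - s * b))) by (apply Rmult_le_pos; lra).
    lra. }
  assert (a ^ 2 <= nu ^ 2) by (replace (a ^ 2) with ((- a) ^ 2) by ring; apply pow_incr; lra).
  nra.
Qed.

End NormalBarrier.

Lemma loewner_le_inv_rescale n A H nu : psd_op n A -> psd_op n H ->
  loewner_le n A (mscal (2 * nu ^ 2) H) -> loewner_le n (mscal (1 / (4 * nu ^ 2)) A) H.
Proof.
  intros HA HH HAH h Hh; specialize (HAH h Hh); rewrite quad_mscal in *.
  pose proof (HA h Hh); pose proof (HH h Hh).
  destruct (Req_dec nu 0) as [->|Hnu].
  - (* junk value: [1 / 0 = 0] in Rocq *)
    replace (1 / (4 * 0 ^ 2)) with 0
      by (unfold Rdiv; rewrite pow_i, Rmult_0_r, Rinv_0 by lia; ring).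
    lra.
  - assert (0 < nu ^ 2) by (apply pow2_gt_0; assumption).
    apply Rle_trans with (1 / (4 * nu ^ 2) * (2 * nu ^ 2 * quad n H h)).
    + apply Rmult_le_compat_l; [apply Rle_mult_inv_pos; lra|assumption].
    + replace (1 / (4 * nu ^ 2) * (2 * nu ^ 2 * quad n H h)) with (quad n H h / 2) by (field; lra).
      lra.
Qed.

Lemma loewner_le_mscal_mono n A B c d : psd_op n A -> c <= d ->
  loewner_le n B (mscal c A) -> loewner_le n B (mscal d A).
Proof.
  intros HA Hcd HBA h Hh; specialize (HBA h Hh); rewrite quad_mscal in *.
  pose proof (HA h Hh); nra.
Qed.

Theorem mainTheorem1 (n : nat) (K : Vec -> Prop) (F : Vec -> R)
  (g : Vec -> Vec) (Hs : Vec -> Mat) (nu : R) :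
  regular_cone n K ->
  normal_barrier n K F g Hs nu ->
  (forall (H : Mat) (u x : Vec),
     selfadj_op n H -> posdef_op n H -> inE n u ->
     (forall w, inE n w -> quad n H (vsub w u) <= 1 -> K w) ->
     cone_int n K x ->
     0 <= dot n (g x) (vsub u x) ->
     loewner_le n (mscal (1 / (4 * nu ^ 2)) (Hs x)) H) /\
  (forall x u : Vec,
     cone_int n K x -> cone_int n K u ->
     0 <= dot n (g x) (vsub u x) ->
     loewner_le n (mscal (1 / (4 * nu ^ 2)) (Hs x)) (Hs u)) /\
  (forall x u : Vec,
     cone_int n K x -> K u ->
     loewner_le n (Hs (vadd x u)) (mscal (4 * nu ^ 2) (Hs x))).
Proof.
  intros HK HB.
  pose proof (barrier_hess_psd n K F g Hs nu HB) as Hpsd.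
  pose proof (barrier_hess_le_ellipsoid n K F g Hs nu HK HB) as Hhess.
  pose proof (dikin_ellipsoid_subset n K F g Hs nu HK HB) as Hdikin.
  split; [|split].
  - intros H u x _ HH Hu Hell Hx Hgx.
    apply loewner_le_inv_rescale; [apply Hpsd, Hx|apply posdef_op_psd, HH|].
    apply (Hhess H u x); [apply posdef_op_psd|..]; assumption.
  - intros x u Hx Hu Hgx.
    apply loewner_le_inv_rescale; [apply Hpsd, Hx|apply Hpsd, Hu|].
    apply (Hhess (Hs u) u x);
      [apply Hpsd, Hu|exact (cone_int_inE n K u Hu)|exact (fun w => Hdikin u w Hu)|..];
      assumption.
  - intros x u Hx Hu.
    assert (Hxu : cone_int n K (vadd x u)) by (apply cone_int_add; assumption).
    apply loewner_le_mscal_mono with (2 * nu ^ 2); [apply Hpsd, Hx|nra|].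
    apply (Hhess (Hs x) x (vadd x u));
      [apply Hpsd, Hx|exact (cone_int_inE n K x Hx)|exact (fun w => Hdikin x w Hx)|..];
      [assumption|].
    replace (vsub x (vadd x u)) with (vscal (-1) u) by (vec_ext; ring).
    rewrite dot_scalr.
    pose proof (barrier_grad_dot_le0 n K F g Hs nu HK HB _ _ Hxu Hu); lra.
Qed.
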